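(* Let $s$ be a Nash equilibrium in an $n$-resource selection game $G=\bigl((f_j)_{j=1}^n;(\mu^{R})_{\emptyset\ne R\subseteq[n]}\bigr)$, and let $P^s=\arg\max_{j\in[n]}h^s_j$ (the set of all maximizers). Then: (a) $P^s=P_G$; (b) $h^s_j=h_G$ for every $j\in P^s$; (c) $s_j(R)=0$ for every nonempty $R\subseteq[n]$ with $R\not\subseteq P^s$ and every $j\in P^s$; (d) if $P^s\ne[n]$, the map $s'$ defined for nonempty $R'\subseteq[n]\setminus P^s$ and $j\in[n]\setminus P^s$ by $s'_j(R')=\sum_{R:\,R\setminus P^s=R'}s_j(R)$ is a Nash equilibrium of the game $G-P^s$, and $h^{s'}_j=h^s_j$ for every $j\in[n]\setminus P^s$.
   Context: An $n$-resource selection game is $G=\bigl((f_j)_{j=1}^n;(\mu^{R})_{\emptyset\ne R\subseteq[n]}\bigr)$ with each $f_j:[0,\infty)\to\mathbb{R}$ nondecreasing and each $\mu^R\ge0$. A consumption profile assigns to each nonempty $R$ a vector $s(R)\in[0,\infty)^{[n]}$ with $s_j(R)=0$ for $j\notin R$ and $\sum_j s_j(R)=\mu^R$; loads $\mu^s_j=\sum_R s_j(R)$, costs $h^s_j=f_j(\mu^s_j)$; $s$ is a Nash equilibrium if for every $R$, every $k$ with $s_k(R)>0$ and every $j\in R$, $h^s_k\le h^s_j$. Equalization: for nondecreasing $g_1,\ldots,g_m:[0,\infty)\to\mathbb{R}\cup\{\mathrm{undefined}\}$, $\mathrm{eq}(g_1,\ldots,g_m)(\mu)=g_1(\mu_1)$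 if there exist $\mu_1,\ldots,\mu_m\ge0$ summing to $\mu$ with $g_1(\mu_1)=\cdots=g_m(\mu_m)\in\mathbb{R}$, else $\mathrm{undefined}$. For nonempty $S\subseteq[n]$: $E_G(S)=\mathrm{eq}(f_k:k\in S)\bigl(\sum_{\emptyset\ne R\subseteq S}\mu^R\bigr)$; $M_G(S)$ is the set of nonempty $S'\subseteq S$ such that for every $0\le\mu\le\sum_{R\subseteq S,\,R\cap S'\ne\emptyset}\mu^R$, $\mathrm{eq}(f_k:k\in S')(\mu)\ne E_G(S)$ ($\mathrm{undefined}$ differs from every real); $D_G=\{S: E_G(S)\in\mathbb{R},\ M_G(S)=\emptyset\}$; $h_G=\max_{S\in D_G}E_G(S)$; $P_G=\bigcup\{S\in D_G:E_G(S)=h_G\}$. Resource removal: for $S\subsetneq[n]$, $G-S$ is the $|[n]\setminus S|$-resource selection game with resources $[n]\setminus S$, cost functions $(f_j)_{j\notin S}$, and mass $\sum_{R:\,R\setminus S=R'}\mu^R$ for each nonempty $R'\subseteq[n]\setminus S$. *)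

From HB Require Import structures.
From mathcomp Require Import all_boot all_order all_algebra.
Set Implicit Arguments. Unset Strict Implicit. Unset Printing Implicit Defensive.
Import Order.TTheory GRing.Theory Num.Theory.
Local Open Scope ring_scope.

Section ResourceSelection.
Variable R : realFieldType.
Variable T : finType.

Definition nondecr (g : R -> R) : Prop :=
  forall x y, 0 <= x -> x <= y -> g x <= g y.

(* Games are given by cost functions f : T -> R -> R and masses
   mu : {set T} -> R (mass mu R for coalition R).  A game on a ground set
   U : {set T} only uses coalitions that are nonempty subsets of U. *)

Definition is_profile (U : {set T}) (mu : {set T} -> R)
    (s : {set T} -> T -> R) : Prop :=
  forall Rc : {set T}, Rc \subset U -> Rc != set0 ->
    [/\ (forall j, j \in U -> 0 <= s Rc j),
        (forall j, j \in U -> j \notin Rc -> s Rc j = 0)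
      & \sum_(j in U) s Rc j = mu Rc].

Definition load (U : {set T}) (s : {set T} -> T -> R) (j : T) : R :=
  \sum_(Rc : {set T} | (Rc \subset U) && (Rc != set0)) s Rc j.

Definition cost (U : {set T}) (f : T -> R -> R) (s : {set T} -> T -> R)
    (j : T) : R := f j (load U s j).

Definition is_nash (U : {set T}) (f : T -> R -> R) (mu : {set T} -> R)
    (s : {set T} -> T -> R) : Prop :=
  is_profile U mu s /\
  forall Rc : {set T}, Rc \subset U -> Rc != set0 ->
    forall k j, k \in U -> j \in Rc -> 0 < s Rc k ->
      cost U f s k <= cost U f s j.

(* eq(f_k : k in S)(m) = v  (S nonempty); the value is unique when the
   f_k are nondecreasing, so this relation is the graph of eq. *)
Definition is_eq (f : T -> R -> R) (S : {set T}) (m v : R) : Prop :=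
  exists x : T -> R,
    [/\ (forall k, k \in S -> 0 <= x k),
        \sum_(k in S) x k = m
      & (forall k, k \in S -> f k (x k) = v)].

Definition mass_within (mu : {set T} -> R) (S : {set T}) : R :=
  \sum_(Rc : {set T} | (Rc != set0) && (Rc \subset S)) mu Rc.

Definition mass_meeting (mu : {set T} -> R) (S S' : {set T}) : R :=
  \sum_(Rc : {set T} | (Rc \subset S) && (Rc :&: S' != set0)) mu Rc.

Definition E_is (f : T -> R -> R) (mu : {set T} -> R) (S : {set T}) (v : R)
  : Prop := is_eq f S (mass_within mu S) v.

(* S in D_G with E_G(S) = v : E_G(S) = v is real and M_G(S) is empty,
   i.e. no nonempty S' subset of S belongs to M_G(S). *)
Definition in_D (f : T -> R -> R) (mu : {set T} -> R) (S : {set T}) (v : R)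
  : Prop :=
  E_is f mu S v /\
  forall S' : {set T}, S' != set0 -> S' \subset S ->
    exists m, [/\ 0 <= m, m <= mass_meeting mu S S' & is_eq f S' m v].

Definition is_hG (f : T -> R -> R) (mu : {set T} -> R) (h : R) : Prop :=
  (exists S : {set T}, S != set0 /\ in_D f mu S h) /\
  forall (S : {set T}) v, S != set0 -> in_D f mu S v -> v <= h.

Definition in_PG (f : T -> R -> R) (mu : {set T} -> R) (h : R) (j : T)
  : Prop :=
  exists S : {set T}, [/\ S != set0, in_D f mu S h & j \in S].

Definition argmax_set (f : T -> R -> R) (s : {set T} -> T -> R) : {set T} :=
  [set j | [forall i, cost [set: T] f s i <= cost [set: T] f s j]].

Definition remove_mass (mu : {set T} -> R) (P : {set T}) (R' : {set T}) : R :=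
  \sum_(Rc : {set T} | (Rc != set0) && (Rc :\: P == R')) mu Rc.

Definition remove_prof (s : {set T} -> T -> R) (P : {set T})
    (R' : {set T}) (j : T) : R :=
  \sum_(Rc : {set T} | (Rc != set0) && (Rc :\: P == R')) s Rc j.

End ResourceSelection.

(* In an equilibrium every coalition meeting the maximal-cost set P^s either
   lies inside P^s or sends nothing to it, since a resource of lower cost is
   available.  Hence the loads on P^s are fed exactly by the coalitions inside
   P^s, which shows that P^s lies in D_G with value h = max_j h^s_j.  Conversely,
   if some S in D_G had a larger value, or had value h while containing a
   resource of cost below h, then the equalizing loads on S (resp. on S minus
   P^s) would all strictly exceed the equilibrium loads, while the mass
   available to them is at most the total equilibrium load there.  Removing
   P^s changes neither the remaining loads nor the equilibrium conditions. *)
From HB Require Import structures.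
From mathcomp Require Import all_boot all_order all_algebra.
Set Implicit Arguments. Unset Strict Implicit. Unset Printing Implicit Defensive.
Import Order.TTheory GRing.Theory Num.Theory.
Local Open Scope ring_scope.

Lemma ler_sum_subpred (R : numDomainType) (I : finType) (P Q : pred I)
    (F : I -> R) :
  (forall i, P i -> Q i) -> (forall i, Q i -> ~~ P i -> 0 <= F i) ->
  \sum_(i | P i) F i <= \sum_(i | Q i) F i.
Proof.
move=> PQ F0; rewrite [X in _ <= X](bigID P) /=.
rewrite (eq_bigl P) ?lerDl ?sumr_ge0 //.
- by move=> i /andP [hQ hP]; apply: F0.
- by move=> i; apply/andP/idP => [[]//|h]; split=> //; apply: PQ.
Qed.

Lemma nondecr_lt_arg (R : realFieldType) (g : R -> R) (x y : R) :
  nondecr g -> 0 <= x -> g y < g x -> y < x.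
Proof.
by move=> g_nd x0 lt_gyx; rewrite ltNge; apply/negP => /(g_nd _ _ x0); rewrite leNgt lt_gyx.
Qed.

Section NashEquilibrium.
Variables (R : realFieldType) (T : finType).
Variables (f : T -> R -> R) (mu : {set T} -> R) (s : {set T} -> T -> R).
Hypothesis hs : is_nash [set: T] f mu s.

Local Notation c := (cost [set: T] f s).
Local Notation ld := (load [set: T] s).
Local Notation Ps := (argmax_set f s).

Lemma profile_ge0 Rc j : Rc != set0 -> 0 <= s Rc j.
Proof. by move=> hR; case: hs => /(_ Rc (subsetT _) hR) [+ _ _] _; apply; rewrite inE. Qed.

Lemma profile_out Rc j : Rc != set0 -> j \notin Rc -> s Rc j = 0.
Proof. by move=> hR; case: hs => /(_ Rc (subsetT _) hR) [_ + _] _; apply; rewrite inE. Qed.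

Lemma sum_profile_in Rc (A : {set T}) : Rc != set0 ->
  (forall k, k \notin A -> s Rc k = 0) -> \sum_(k in A) s Rc k = mu Rc.
Proof.
move=> hR hA; case: hs => /(_ Rc (subsetT _) hR) [_ _ <-] _.
rewrite [RHS](eq_bigl xpredT) => [|k]; last by rewrite inE.
by rewrite [RHS](bigID (mem A)) /= [X in _ = _ + X]big1 ?addr0 // => k /hA.
Qed.

Lemma sum_profile_sub Rc (A : {set T}) : Rc != set0 -> Rc \subset A ->
  \sum_(k in A) s Rc k = mu Rc.
Proof.
move=> hR hRA; apply: sum_profile_in => // k hk; apply: profile_out => //.
by apply: contra hk; apply: (subsetP hRA).
Qed.

Lemma nash_cost_le Rc k j : Rc != set0 -> j \in Rc -> 0 < s Rc k -> c k <= c j.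
Proof. by move=> hR hj hk; case: hs => _ /(_ Rc (subsetT _) hR k j (in_setT k)); apply. Qed.

Lemma load_setT j : ld j = \sum_(Rc | Rc != set0) s Rc j.
Proof. by apply: eq_bigl => Rc; rewrite subsetT. Qed.

Lemma load_ge0 j : 0 <= ld j.
Proof. by rewrite load_setT; apply: sumr_ge0 => Rc; apply: profile_ge0. Qed.

Lemma sum_load_exchange (A : {set T}) :
  \sum_(k in A) ld k = \sum_(Rc | Rc != set0) \sum_(k in A) s Rc k.
Proof. by under eq_bigr do rewrite load_setT; exact: exchange_big. Qed.

Lemma argmax_costP j : reflect (forall i, c i <= c j) (j \in Ps).
Proof. by rewrite inE; apply: forallP. Qed.

Lemma cost_lt_argmax i j : j \in Ps -> i \notin Ps -> c i < c j.
Proof.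
move=> /argmax_costP jmax; apply: contraNT; rewrite -leNgt => le_ji.
by apply/argmax_costP => i'; apply: le_trans le_ji.
Qed.

Lemma argmax_profile_out Rc j : Rc != set0 -> ~~ (Rc \subset Ps) ->
  j \in Ps -> s Rc j = 0.
Proof.
move=> hR /subsetPn [i hiR hiP] hj.
have := profile_ge0 j hR; rewrite le_eqVlt => /orP [/eqP <- //|hpos].
by have := le_lt_trans (nash_cost_le hR hiR hpos) (cost_lt_argmax hj hiP); rewrite ltxx.
Qed.

Lemma mass_within_le_load (S : {set T}) :
  mass_within mu S <= \sum_(k in S) ld k.
Proof.
rewrite sum_load_exchange /mass_within.
rewrite (eq_bigr (fun Rc => \sum_(k in S) s Rc k)) => [|Rc /andP [hR hRS]].
  apply: ler_sum_subpred => [Rc /andP [] //|Rc hR _].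
  by apply: sumr_ge0 => k _; apply: profile_ge0.
by rewrite sum_profile_sub.
Qed.

Lemma mass_meeting_le_load (S : {set T}) :
  mass_meeting mu S (S :\: Ps) <= \sum_(k in S :\: Ps) ld k.
Proof.
rewrite sum_load_exchange /mass_meeting.
have meet_nonempty Rc : Rc :&: (S :\: Ps) != set0 -> Rc != set0.
  by apply: contraNN => /eqP ->; rewrite set0I.
rewrite (eq_bigr (fun Rc => \sum_(k in S :\: Ps) s Rc k)).
  apply: ler_sum_subpred => [Rc /andP [_ /meet_nonempty] //|Rc hR _].
  by apply: sumr_ge0 => k _; apply: profile_ge0.
move=> Rc /andP [hRS hmeet]; have hR := meet_nonempty _ hmeet.
symmetry; apply: sum_profile_in => // k hk.
have [hkR|] := boolP (k \in Rc); last exact: profile_out.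
apply: argmax_profile_out => //.
  case/set0Pn: hmeet => i; rewrite in_setI in_setD => /and3P [hiR hiP _].
  by apply/subsetPn; exists i.
by move: hk; rewrite in_setD (subsetP hRS _ hkR) andbT negbK.
Qed.

Lemma mass_within_argmax : mass_within mu Ps = \sum_(k in Ps) ld k.
Proof.
rewrite sum_load_exchange /mass_within.
rewrite [RHS](bigID (fun Rc : {set T} => Rc \subset Ps)) /=.
rewrite [X in _ = _ + X]big1 ?addr0 => [|Rc /andP [hR hRP]]; last first.
  by apply: big1 => k; apply: argmax_profile_out.
by apply: eq_bigr => Rc /andP [hR hRP]; rewrite sum_profile_sub.
Qed.

Lemma load_le_mass_meeting (S' : {set T}) : S' \subset Ps ->
  \sum_(k in S') ld k <= mass_meeting mu Ps S'.
Proof.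
move=> hS'P; rewrite sum_load_exchange /mass_meeting.
pose Q (Rc : {set T}) := (Rc \subset Ps) && (Rc :&: S' != set0).
rewrite (bigID Q) /= [X in _ + X <= _]big1 ?addr0 => [|Rc /andP [hR]]; last first.
  rewrite negb_and negbK => /orP [hRP|/eqP hI]; apply: big1 => k hk.
    by apply: argmax_profile_out => //; apply: (subsetP hS'P).
  apply: profile_out => //; apply: contra_eqN hI => hkR.
  by apply/set0Pn; exists k; rewrite inE hkR.
rewrite [X in _ <= X](eq_bigl (fun Rc => (Rc != set0) && Q Rc)) => [|Rc].
  apply: ler_sum => Rc /andP [hR _].
  rewrite -(@sum_profile_in Rc setT) => [|//|k]; last by rewrite in_setT.
  apply: ler_sum_subpred => [k _|k _ _]; [exact: in_setT | exact: profile_ge0].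
rewrite /Q; have [_|/set0Pn [k]] := eqVneq (Rc :&: S') set0; first by rewrite !andbF.
rewrite in_setI => /andP [hk _]; rewrite !andbT.
by have -> : Rc != set0 by apply/set0Pn; exists k.
Qed.

Hypothesis hf : forall j, nondecr (f j).

Lemma load_lt_eq_mass (S : {set T}) m v : S != set0 -> is_eq f S m v ->
  (forall k, k \in S -> c k < v) -> \sum_(k in S) ld k < m.
Proof.
case/set0Pn=> k0 hk0 [x [x0 <- xv]] lt_cv.
apply: ltr_sum; first by apply/hasP; exists k0 => //; apply: mem_index_enum.
by move=> k hk; apply: (nondecr_lt_arg (hf k) (x0 k hk)); rewrite xv ?lt_cv.
Qed.

Variable j0 : T.
Hypothesis j0_max : j0 \in Ps.

Lemma cost_le_argmax i : c i <= c j0.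
Proof. exact: (elimT (argmax_costP _) j0_max). Qed.

Lemma argmax_cost j : j \in Ps -> c j = c j0.
Proof. by move=> /argmax_costP jmax; apply/le_anti; rewrite jmax cost_le_argmax. Qed.

Lemma is_eq_argmax_load (S : {set T}) : S \subset Ps ->
  is_eq f S (\sum_(k in S) ld k) (c j0).
Proof.
move=> hSP; exists ld; split=> // [k _|k hk]; first exact: load_ge0.
exact: argmax_cost (subsetP hSP k hk).
Qed.

Lemma in_D_argmax : in_D f mu Ps (c j0).
Proof.
split; first by rewrite /E_is mass_within_argmax; apply: is_eq_argmax_load.
move=> S' _ hS'P; exists (\sum_(k in S') ld k); split.
- by apply: sumr_ge0 => k _; apply: load_ge0.
- exact: load_le_mass_meeting.
- exact: is_eq_argmax_load.
Qed.

Lemma in_D_le_argmax (S : {set T}) v : S != set0 -> in_D f mu S v -> v <= c j0.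
Proof.
move=> hS [hE _]; rewrite leNgt; apply/negP => lt_cv.
have := load_lt_eq_mass hS hE (fun k _ => le_lt_trans (cost_le_argmax k) lt_cv).
by rewrite ltNge mass_within_le_load.
Qed.

Lemma in_D_argmax_sub (S : {set T}) : in_D f mu S (c j0) -> S \subset Ps.
Proof.
move=> [_ hD]; rewrite -setD_eq0; apply: contraT => hS'.
have [m [_ mle heq]] := hD _ hS' (subsetDl _ _).
have lt_c k : k \in S :\: Ps -> c k < c j0.
  by rewrite in_setD => /andP [kP _]; apply: cost_lt_argmax.
have := load_lt_eq_mass hS' heq lt_c.
by rewrite ltNge (le_trans mle (mass_meeting_le_load S)).
Qed.

Lemma is_hG_argmax : is_hG f mu (c j0).
Proof.
split; last exact: in_D_le_argmax.
by exists Ps; split; [apply/set0Pn; exists j0 | exact: in_D_argmax].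
Qed.

Lemma argmax_in_PG j : j \in Ps <-> in_PG f mu (c j0) j.
Proof.
split=> [hj|[S [_ hD hjS]]]; last exact: subsetP (in_D_argmax_sub hD) _ hjS.
by exists Ps; split=> //; [apply/set0Pn; exists j | exact: in_D_argmax].
Qed.

End NashEquilibrium.

Section Removal.
Variables (R : realFieldType) (T : finType).
Variables (f : T -> R -> R) (mu : {set T} -> R) (s : {set T} -> T -> R).
Hypothesis hs : is_nash [set: T] f mu s.
Variable P : {set T}.
Hypothesis P_unused : forall Rc j, Rc != set0 -> ~~ (Rc \subset P) ->
  j \in P -> s Rc j = 0.

Local Notation s' := (remove_prof s P).

Lemma load_remove_prof j : j \in ~: P ->
  load (~: P) s' j = load [set: T] s j.
Proof.
move=> hj; rewrite load_setT /load /remove_prof.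
rewrite [RHS](bigID (fun Rc : {set T} => Rc :\: P != set0)) /=.
rewrite [X in _ = _ + X]big1 ?addr0 => [|Rc /andP [hR]]; last first.
  rewrite negbK setD_eq0 => hsub; apply: (profile_out hs) => //.
  by apply: contraL hj => /(subsetP hsub); rewrite in_setC negbK.
rewrite [RHS](partition_big (fun Rc => Rc :\: P)
  (fun R' => (R' \subset ~: P) && (R' != set0))) /=; last first.
  by move=> Rc /andP [_ ->]; rewrite andbT subDset setUCr subsetT.
apply: eq_bigr => R' /andP [_ hR']; apply: eq_bigl => Rc.
apply/andP/andP => [[h1 h2] | [/andP [h1 _] h2]]; split => //.
by rewrite h1 (eqP h2).
Qed.

Lemma cost_remove_prof j : j \in ~: P ->
  cost (~: P) f s' j = cost [set: T] f s j.
Proof. by move=> hj; rewrite /cost load_remove_prof. Qed.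

Lemma is_nash_remove : is_nash (~: P) f (remove_mass mu P) s'.
Proof.
split=> [R' hR'P hR'|R' hR'P hR' k j hk hj].
  split=> [j _|j hj hjR'|].
  - by apply: sumr_ge0 => Rc /andP [hR _]; apply: (profile_ge0 hs).
  - apply: big1 => Rc /andP [hR /eqP hD]; apply: (profile_out hs) => //.
    by apply: contra hjR' => hjR; rewrite -hD inE hjR andbT -in_setC.
  rewrite /remove_prof /remove_mass exchange_big.
  apply: eq_bigr => Rc /andP [hR /eqP hD]; apply: (sum_profile_in hs) => // k.
  by rewrite inE negbK; apply: P_unused; rewrite // -setD_eq0 hD.
move=> hpos; have [Rc /andP [/andP [hR /eqP hD] hRk]] :
    exists Rc, ((Rc != set0) && (Rc :\: P == R')) && (0 < s Rc k).
  apply: psumr_neq0P => [Rc /andP [hR _]|]; first by apply: (profile_ge0 hs).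
  by apply/eqP; rewrite gt_eqF.
rewrite !cost_remove_prof //; last exact: subsetP hR'P _ hj.
by apply: (nash_cost_le hs hR _ hRk); move: hj; rewrite -hD in_setD => /andP [].
Qed.

End Removal.

Theorem mainTheorem14 (R : realFieldType) (n : nat) (hn : (0 < n)%N)
    (f : 'I_n -> R -> R) (mu : {set 'I_n} -> R) (s : {set 'I_n} -> 'I_n -> R)
    (hf : forall j, nondecr (f j))
    (hmu : forall Rc : {set 'I_n}, Rc != set0 -> 0 <= mu Rc)
    (hs : is_nash [set: 'I_n] f mu s) :
  let Ps := argmax_set f s in
  [/\ (* (a) and (b) *)
      (exists h, [/\ is_hG f mu h,
                     (forall j, j \in Ps <-> in_PG f mu h j)
                   & (forall j, j \in Ps -> cost [set: 'I_n] f s j = h)]),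
      (* (c) *)
      (forall Rc : {set 'I_n}, Rc != set0 -> ~~ (Rc \subset Ps) ->
         forall j, j \in Ps -> s Rc j = 0)
    & (* (d) *)
      (Ps != [set: 'I_n] ->
         is_nash (~: Ps) f (remove_mass mu Ps) (remove_prof s Ps) /\
         (forall j, j \in ~: Ps ->
            cost (~: Ps) f (remove_prof s Ps) j = cost [set: 'I_n] f s j))].
Proof.
move=> Ps; have P_unused := argmax_profile_out hs.
pose j0 := [arg max_(i > Ordinal hn) cost [set: 'I_n] f s i]%O.
have j0_max : j0 \in Ps.
  by apply/argmax_costP; rewrite /j0; case: arg_maxP => // i _ imax i'; apply: imax.
split=> [|Rc hR hRP j hj|_]; last first.
- by split; [exact (is_nash_remove hs P_unused) | move=> j; exact: (cost_remove_prof hs (P := Ps))].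
- exact: P_unused Rc j hR hRP hj.
- exists (cost [set: 'I_n] f s j0); split.
  + exact (is_hG_argmax hs hf j0_max).
  + exact (argmax_in_PG hs hf j0_max).
  + exact (argmax_cost j0_max).
Qed.
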